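(* Let $\mathcal H_1,\mathcal H_2$ be Hilbert spaces, $A\in\mathcal B(\mathcal H_1,\mathcal H_2)$ and $B$ its Moore--Penrose inverse. If $x\in\mathcal R(B)$, then $$\|x\|_{\mathcal H_1}^2=\|(I+BB^* )^{-1/2}x\|_{\mathcal H_1}^2+\|(I+A^*A)^{-1/2}x\|_{\mathcal H_1}^2.$$
   Context: $\mathcal B(\mathcal H_1,\mathcal H_2)$ is the space of bounded linear operators. For a closed densely defined operator $A$ between Hilbert spaces, its Moore--Penrose inverse $A^\dagger$ is the unique closed densely defined operator with $\mathcal D(A^\dagger)=\mathcal R(A)\oplus\mathcal N(A^* )$, $\mathcal N(A^\dagger)=\mathcal N(A^* )$, $AA^\dagger A=A$, $A^\dagger AA^\dagger=A^\dagger$, $AA^\dagger\subset P_{\overline{\mathcal R(A)}}$, $A^\dagger A\subset P_{\overline{\mathcal R(A^\dagger)}}$ ($P_{\mathcal E}$ the orthogonal projection onto $\mathcal E$). For closed densely defined $B$, the operators $(I+BB^* )^{-1}$, $(I+B^*B)^{-1}$ are everywhere defined, bounded, positive and self-adjoint (von Neumann), so their square roots are defined. *)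

(* Unbounded operators are represented as a domain (a predicate) together with
   a total function whose values outside the domain are irrelevant. *)
From mathcomp Require Import all_boot all_algebra.
From mathcomp Require Import reals.
From mathcomp.real_closed Require Import complex.
Set Implicit Arguments. Unset Strict Implicit. Unset Printing Implicit Defensive.
Import GRing.Theory Num.Theory.
Local Open Scope ring_scope.
Local Open Scope complex_scope.

Section Hilbert.
Variable R : realType.

Section OneSpace.
Variables (V : lmodType R[i]) (ip : V -> V -> R[i]).

Definition hnorm (x : V) : R := Num.sqrt (complex.Re (ip x x)).

Definition is_inner_product : Prop :=
  [/\ (forall (a : R[i]) (x y z : V), ip (a *: x + y) z = a * ip x z + ip y z),
      (forall x y : V, ip x y = (ip y x)^*),
      (forall x : V, 0 <= ip x x) &
      (forall x : V, ip x x = 0 -> x = 0)].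

Definition hconverges (u : nat -> V) (l : V) : Prop :=
  forall e : R, 0 < e -> exists N : nat, forall n, (N <= n)%N -> hnorm (u n - l) < e.

Definition hcauchy (u : nat -> V) : Prop :=
  forall e : R, 0 < e -> exists N : nat, forall m n, (N <= m)%N -> (N <= n)%N ->
    hnorm (u m - u n) < e.

Definition is_hilbert : Prop :=
  is_inner_product /\ forall u, hcauchy u -> exists l, hconverges u l.

Definition hclosure (E : V -> Prop) (y : V) : Prop :=
  forall e : R, 0 < e -> exists z, E z /\ hnorm (y - z) < e.

Definition is_subspace (E : V -> Prop) : Prop :=
  E 0 /\ forall (a : R[i]) x y, E x -> E y -> E (a *: x + y).

Definition is_orth_proj (E : V -> Prop) (x p : V) : Prop :=
  E p /\ forall e, E e -> ip (x - p) e = 0.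

(* S is a bounded positive self-adjoint operator with S^2 = T, i.e. S = T^(1/2)
   (the positive square root is unique) *)
Definition is_positive_sqrt (T S : V -> V) : Prop :=
  [/\ (forall (a : R[i]) x y, S (a *: x + y) = a *: S x + S y),
      (exists M : R, forall x, hnorm (S x) <= M * hnorm x),
      (forall x y, ip (S x) y = ip x (S y)),
      (forall x, 0 <= ip (S x) x) &
      (forall x, S (S x) = T x)].

End OneSpace.

Section TwoSpaces.
Variables (V W : lmodType R[i]) (ipV : V -> V -> R[i]) (ipW : W -> W -> R[i]).

Definition is_bounded_op (A : V -> W) : Prop :=
  (forall (a : R[i]) x y, A (a *: x + y) = a *: A x + A y) /\
  exists M : R, forall x, hnorm ipW (A x) <= M * hnorm ipV x.

Definition is_bounded_adjoint (A : V -> W) (As : W -> V) : Prop :=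
  forall x y, ipW (A x) y = ipV x (As y).

Definition is_closed_densely_defined (D : V -> Prop) (B : V -> W) : Prop :=
  [/\ is_subspace D,
      (forall (a : R[i]) x y, D x -> D y -> B (a *: x + y) = a *: B x + B y),
      (forall y, hclosure ipV D y) &
      (forall (u : nat -> V) y z, (forall n, D (u n)) -> hconverges ipV u y ->
          hconverges ipW (fun n => B (u n)) z -> D y /\ B y = z)].

Definition is_adjoint_op (D : V -> Prop) (B : V -> W)
    (Ds : W -> Prop) (Bs : W -> V) : Prop :=
  (forall z, Ds z <-> exists w, forall y, D y -> ipW (B y) z = ipV y w) /\
  (forall z, Ds z -> forall y, D y -> ipW (B y) z = ipV y (Bs z)).

End TwoSpaces.
Definition is_MP_inverse (V W : lmodType R[i]) (ipV : V -> V -> R[i])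
    (ipW : W -> W -> R[i]) (A : V -> W) (As : W -> V) (D : W -> Prop) (B : W -> V)
    : Prop :=
  is_closed_densely_defined ipW ipV D B /\
      (forall y, D y <-> exists x n, As n = 0 /\ y = A x + n) /\
      (forall y, (D y /\ B y = 0) <-> As y = 0) /\
      (forall x, D (A x) /\ A (B (A x)) = A x) /\
      (forall y, D y -> D (A (B y)) /\ B (A (B y)) = B y) /\
      (forall y, D y -> is_orth_proj ipW (hclosure ipW (fun z => exists x, z = A x))
                                     y (A (B y))) /\
      (forall x, is_orth_proj ipV
                   (hclosure ipV (fun z => exists y, D y /\ z = B y)) x (B (A x))).

End Hilbert.

From mathcomp Require Import all_boot all_algebra.
From mathcomp Require Import reals.
From mathcomp.real_closed Require Import complex.
Set Implicit Arguments. Unset Strict Implicit. Unset Printing Implicit Defensive.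
Import GRing.Theory Num.Theory.
Local Open Scope ring_scope.
Local Open Scope complex_scope.

(* Let x = B y and z = (I + BB^* )^{-1} x, so that x = z + BB^* z.  Since
   z = B (y - B^* z) lies in R(B), the Moore--Penrose identities give
   A^* B^* z = z, and A^* A B w = A^* w for every w in D(B).  Hence BB^* z
   solves (I + A^* A) u = x, and by injectivity of I + A^* A it equals
   (I + A^* A)^{-1} x.  Therefore x = (I + BB^* )^{-1} x + (I + A^* A)^{-1} x,
   and pairing with x turns each summand into a squared norm
   <x, S^2 x> = ||S x||^2 of the corresponding square root. *)

Section InnerProduct.
Variables (R : realType) (V : lmodType R[i]) (ip : V -> V -> R[i]).
Hypothesis ip_inner : is_inner_product ip.

Lemma ipDl u w v : ip (u + w) v = ip u v + ip w v.
Proof. by case: ip_inner => lin _ _ _; rewrite -{1}(scale1r u) lin mul1r. Qed.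

Lemma ip0l v : ip 0 v = 0.
Proof. by apply: (addrI (ip 0 v)); rewrite -ipDl !addr0. Qed.

Lemma ipNl u v : ip (- u) v = - ip u v.
Proof. by apply/eqP; rewrite -addr_eq0 -ipDl addNr ip0l. Qed.

Lemma ipBl u w v : ip (u - w) v = ip u v - ip w v.
Proof. by rewrite ipDl ipNl. Qed.

Lemma ipDr v u w : ip v (u + w) = ip v u + ip v w.
Proof. by case: ip_inner => _ cs _ _; rewrite cs ipDl rmorphD /= -!cs. Qed.

Lemma ipBr v u w : ip v (u - w) = ip v u - ip v w.
Proof. by case: ip_inner => _ cs _ _; rewrite cs ipBl rmorphB /= -!cs. Qed.

Lemma ipr_inj u w : (forall v, ip v u = ip v w) -> u = w.
Proof.
move=> eq_uw; case: ip_inner => _ _ _ def.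
by apply/eqP; rewrite -subr_eq0; apply/eqP/def; rewrite ipBr eq_uw subrr.
Qed.

Lemma hnorm_sqr x : hnorm ip x ^+ 2 = complex.Re (ip x x).
Proof.
rewrite /hnorm sqr_sqrtr //.
by case: ip_inner => _ _ pos _; have := pos x; rewrite lecE => /andP[].
Qed.

Lemma subset_hclosure (E : V -> Prop) y : E y -> hclosure ip E y.
Proof.
move=> Ey e e_gt0; exists y; split=> //.
by rewrite subrr /hnorm ip0l sqrtr0.
Qed.

Lemma positive_sqrt_hnorm_sqr T S :
  is_positive_sqrt ip T S -> forall x, hnorm ip (S x) ^+ 2 = complex.Re (ip x (T x)).
Proof. by case=> _ _ S_sa _ S_sq x; rewrite hnorm_sqr S_sa S_sq. Qed.

End InnerProduct.

Lemma closed_op_rangeB (R : realType) (V W : lmodType R[i])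
    (ipV : V -> V -> R[i]) (ipW : W -> W -> R[i]) (D : V -> Prop) (B : V -> W) :
  is_closed_densely_defined ipV ipW D B ->
  forall w p, D w -> D p -> exists v, D v /\ B w - B p = B v.
Proof.
case=> [[_ D_lin] B_lin _ _] w p Dw Dp.
exists ((-1) *: p + w); split; first exact: D_lin.
by rewrite B_lin // scaleN1r addrC.
Qed.

Section BoundedAdjoint.
Variables (R : realType) (H1 H2 : lmodType R[i]).
Variables (ip1 : H1 -> H1 -> R[i]) (ip2 : H2 -> H2 -> R[i]).
Hypotheses (ip1_inner : is_inner_product ip1) (ip2_inner : is_inner_product ip2).
Variables (A : H1 -> H2) (As : H2 -> H1).
Hypotheses (A_bounded : is_bounded_op ip1 ip2 A)
           (As_adjoint : is_bounded_adjoint ip1 ip2 A As).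

Lemma bounded_opB u v : A (u - v) = A u - A v.
Proof.
case: A_bounded => lin _.
by rewrite addrC -scaleN1r lin scaleN1r addrC.
Qed.

Lemma adjointB u v : As (u - v) = As u - As v.
Proof.
by apply: (ipr_inj ip1_inner) => t; rewrite ipBr // -!As_adjoint ipBr.
Qed.

(* <u + A^*Au, u> = ||u||^2 + ||Au||^2 vanishes only at u = 0. *)
Lemma add_adjoint_mul_inj : injective (fun u => u + As (A u)).
Proof.
move=> u v /= /eqP; rewrite -subr_eq0 opprD addrACA -adjointB -bounded_opB.
set d := u - v => /eqP d_ker.
have := ipDl ip1_inner d (As (A d)) d; rewrite d_ker ip0l //.
case: (ip1_inner) => _ cs pos def; case: (ip2_inner) => _ _ pos2 _.
rewrite [ip1 (As _) _]cs -As_adjoint => /esym/eqP.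
rewrite paddr_eq0 ?conj_ge0 ?pos ?pos2 // => /andP[/eqP/def/eqP + _].
by rewrite subr_eq0 => /eqP.
Qed.

Variables (D : H2 -> Prop) (B : H2 -> H1) (Ds : H1 -> Prop) (Bs : H1 -> H2).
Hypotheses (B_MP : is_MP_inverse ip1 ip2 A As D B)
           (Bs_adjoint : is_adjoint_op ip2 ip1 D B Ds Bs).

Lemma MP_adjoint_mul_inverse w : D w -> As (A (B w)) = As w.
Proof.
case: B_MP => _ [_ [_ [_ [_ [AB_proj _]]]]] Dw.
apply: (ipr_inj ip1_inner) => v; rewrite -!As_adjoint.
have [_ /(_ (A v))] := AB_proj w Dw.
move=> /(_ (subset_hclosure ip2_inner (ex_intro _ v erefl))) /(congr1 conjc).
case: (ip2_inner) => _ cs _ _.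
by rewrite -cs conjc0 ipBr // => /subr0_eq.
Qed.

Lemma MP_adjoint_fix z : Ds z -> (exists w, D w /\ z = B w) -> As (Bs z) = z.
Proof.
case: B_MP => _ [_ [_ [AD _]]]; case: Bs_adjoint => _ Bs_adj.
move=> /Bs_adj Dsz z_range; apply: (ipr_inj ip1_inner) => v.
rewrite -As_adjoint -Dsz; last by case: (AD v).
case: B_MP => _ [_ [_ [_ [_ [_ /(_ v) [_ BA_proj]]]]]].
by move: (BA_proj z (subset_hclosure ip1_inner z_range)); rewrite ipBl // => /subr0_eq.
Qed.

End BoundedAdjoint.

Theorem proposition3p4 (R : realType) (H1 H2 : lmodType R[i])
    (ip1 : H1 -> H1 -> R[i]) (ip2 : H2 -> H2 -> R[i])
    (A : H1 -> H2) (As : H2 -> H1)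
    (D : H2 -> Prop) (B : H2 -> H1) (Ds : H1 -> Prop) (Bs : H1 -> H2)
    (T S1 U S2 : H1 -> H1) (x : H1) :
  is_hilbert ip1 -> is_hilbert ip2 ->
  is_bounded_op ip1 ip2 A ->
  is_bounded_adjoint ip1 ip2 A As ->
  is_MP_inverse ip1 ip2 A As D B ->
  is_adjoint_op ip2 ip1 D B Ds Bs ->
  (* T = (I + B B^* )^{-1} *)
  (forall y, [/\ Ds (T y), D (Bs (T y)) & T y + B (Bs (T y)) = y]) ->
  (* S1 = (I + B B^* )^{-1/2} *)
  is_positive_sqrt ip1 T S1 ->
  (* U = (I + A^* A)^{-1} *)
  (forall y, U y + As (A (U y)) = y) ->
  (* S2 = (I + A^* A)^{-1/2} *)
  is_positive_sqrt ip1 U S2 ->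
  (* x in R(B) *)
  (exists y, D y /\ x = B y) ->
  hnorm ip1 x ^+ 2 = hnorm ip1 (S1 x) ^+ 2 + hnorm ip1 (S2 x) ^+ 2.
Proof.
move=> [ip1_inner _] [ip2_inner _] A_bounded As_adj B_MP Bs_adj T_inv S1_sqrt U_inv S2_sqrt
  [y [Dy ->]].
have [Ds_z D_Bsz z_eq] := T_inv (B y).
have z_range : exists w, D w /\ T (B y) = B w.
  have [w [Dw Bw]] := closed_op_rangeB (proj1 B_MP) Dy D_Bsz.
  by exists w; split=> //; apply/eqP; rewrite -Bw eq_sym subr_eq z_eq.
have Ux_eq : U (B y) = B (Bs (T (B y))).
  apply: (add_adjoint_mul_inj ip1_inner ip2_inner A_bounded As_adj) => /=.
  rewrite U_inv (MP_adjoint_mul_inverse ip1_inner ip2_inner As_adj B_MP) //.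
  by rewrite (MP_adjoint_fix ip1_inner As_adj B_MP Bs_adj) // addrC.
rewrite (hnorm_sqr ip1_inner) (positive_sqrt_hnorm_sqr ip1_inner S1_sqrt).
rewrite (positive_sqrt_hnorm_sqr ip1_inner S2_sqrt).
have -> : ip1 (B y) (B y) = ip1 (B y) (T (B y)) + ip1 (B y) (U (B y)).
  by rewrite -ipDr // Ux_eq z_eq.
exact: (raddfD (@complex.Re R : Rcomplex R -> R)).
Qed.
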